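(* Let $n>1$, $c=0$ and $\rho>0$. Let $(\mathfrak{l},g_\rho^c)$ be the metric Lie algebra described in the context. Then $(\mathfrak{l},g_\rho^c)$ is a solvsoliton: there exist $\lambda\in\mathbb{R}$ and a derivation $D$ of $\mathfrak{l}$ such that the Ricci endomorphism $\mathrm{ric}$ of the left-invariant metric defined by $g_\rho^c$ on the simply connected Lie group with Lie algebra $\mathfrak{l}$ satisfies $\mathrm{ric}=\lambda\,\mathrm{Id}+D$.
   Context: Fix $n\ge 2$, $\rho>0$, $c\ge 0$. The real Lie algebra $\mathfrak{l}$ has basis $B_a^R,B_a^I$ ($a=1,\dots,n-1$), $e_k,f_k$ ($k=0,\dots,n-1$), $Z$. Its brackets are as follows (all brackets of basis elements not listed, up to antisymmetry, are zero). On $\mathfrak{b}=\mathrm{span}\{B_a^R,B_a^I\}$: $[B_1^R,B_1^I]=2B_1^I$, and for $a\in\{2,\dots,n-1\}$: $[B_1^R,B_a^R]=B_a^R$, $[B_1^R,B_a^I]=B_a^I$, $[B_a^R,B_a^I]=\tfrac12 B_1^I$. On $\mathfrak{heis}_{2n+1}=\mathrm{span}\{e_k,f_k,Z\}$: $[e_0,f_0]=Z$, $[e_a,f_a]=-Z$ for $a\ge 1$. Also $[\mathfrak{b},Z]=0$. The mixed brackets are described after complex-bilinear extension, with $E_k:=e_k-if_k$ and $[B,\bar E_k]=\overline{[B,E_k]}$ for $B\in\mathfrak{b}$ real: for $k=0,\dots,n-1$ and $a\in\{2,\dots,n-1\}$, $[B_1^R,E_k]=-\delta_{k0}E_1-\delta_{k1}E_0$,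 $[B_a^R,E_k]=-\tfrac12(\delta_{k0}+\delta_{k1})E_a-\tfrac12\delta_{ka}(E_0-E_1)$, $[B_1^I,E_k]=-i(\delta_{k0}+\delta_{k1})(E_0-E_1)$, $[B_a^I,E_k]=\tfrac{i}{2}(\delta_{k0}+\delta_{k1})E_a-\tfrac{i}{2}\delta_{ka}(E_0-E_1)$. (Here $\mathfrak{b}$ is the Iwasawa subalgebra of $\mathfrak{su}(1,n-1)$ acting on $\mathfrak{heis}_{2n+1}=\mathbb{C}^n\oplus\mathbb{R}Z$ via the standard representation.) The inner product $g_\rho^c$ on $\mathfrak{l}$ is given by $g(B_1^R,B_1^R)=\frac{\rho+c}{\rho}$, $g(B_1^I,B_1^I)=\frac{(\rho+c)^3}{\rho^2(\rho+2c)}$, $g(B_a^R,B_a^R)=g(B_a^I,B_a^I)=\frac{\rho+c}{4\rho}$ ($a\ge2$), $g(e_0,e_0)=g(f_0,f_0)=\frac{\rho+2c}{4\rho^2}$, $g(e_a,e_a)=g(f_a,f_a)=\frac{1}{4\rho}$ ($a\ge1$), $g(Z,Z)=\frac{\rho+c}{4\rho^2(\rho+2c)}$, $g(B_1^I,Z)=-\frac{c(\rho+c)}{2\rho^2(\rho+2c)}$, and all other pairs of distinct basis vectors orthogonal. This is the left-invariant metric on the group $L$ with Lie algebra $\mathfrak{l}$ corresponding to the metric induced on the level sets $\{\rho\}\times K$ of the one-loop deformation (parameter $c$) of the quaternionic Kähler symmetric space $\mathrm{SU}(n,2)/\mathrm{S}(\mathrm{U}(n)\times\mathrm{U}(2))$,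 on which $L$ acts simply transitively and isometrically. A left-invariant metric on a simply connected solvable Lie group is a solvsoliton if $\mathrm{ric}=\lambda\mathrm{Id}+D$ with $\lambda\in\mathbb{R}$, $D$ a derivation of the Lie algebra. *)

From HB Require Import structures.
From mathcomp Require Import all_boot all_order all_algebra.
From mathcomp Require Import reals.
Set Implicit Arguments. Unset Strict Implicit. Unset Printing Implicit Defensive.
Import Order.TTheory GRing.Theory Num.Theory.
Local Open Scope ring_scope.

(* Generic: left-invariant Riemannian geometry of a metric Lie algebra *)
(* given in a basis b_0,...,b_{N-1} (coordinates = column vectors).    *)
(*   brk i j : coordinates of [b_i, b_j];  G : Gram matrix g(b_i,b_j). *)
Section MetricLie.
Variable R : realType.
Variable N : nat.
Variable brk : 'I_N -> 'I_N -> 'cV[R]_N.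
Variable G : 'M[R]_N.

Definition bas (i : 'I_N) : 'cV[R]_N := delta_mx i 0.

Definition lbr (x y : 'cV[R]_N) : 'cV[R]_N :=
  \sum_(i < N) \sum_(j < N) (x i 0 * y j 0) *: brk i j.

Definition gform (x y : 'cV[R]_N) : R := (x^T *m G *m y) 0 0.

(* Koszul formula for left-invariant fields:
   g(nabla_x y, z) = 1/2 (g([x,y],z) - g([y,z],x) + g([z,x],y)) *)
Definition koszul (x y z : 'cV[R]_N) : R :=
  2^-1 * (gform (lbr x y) z - gform (lbr y z) x + gform (lbr z x) y).

(* Levi-Civita connection: nabla_x y is the unique v with g(v, b_k) = koszul x y b_k *)
Definition nabla (x y : 'cV[R]_N) : 'cV[R]_N :=
  invmx G^T *m \col_k koszul x y (bas k).

Definition curv (x y z : 'cV[R]_N) : 'cV[R]_N :=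
  nabla x (nabla y z) - nabla y (nabla x z) - nabla (lbr x y) z.

Definition ricci_form (y z : 'cV[R]_N) : R :=
  \sum_(i < N) (curv (bas i) y z) i 0.

(* Ricci endomorphism ric, defined by g(ric y, z) = Ric(y, z)
   (matrix acting on column coordinate vectors) *)
Definition ricci_endo : 'M[R]_N :=
  invmx G^T *m (\matrix_(i, j) ricci_form (bas j) (bas i)).

Definition is_derivation (D : 'M[R]_N) : Prop :=
  forall x y : 'cV[R]_N, D *m lbr x y = lbr (D *m x) y + lbr x (D *m y).

End MetricLie.

(* The specific Lie algebra l = b (+) heis_{2n+1}, of dimension 4n-1.  *)

(* basis labels: BR a = B_a^R, BI a = B_a^I (1<=a<=n-1),
   Ee k = e_k, Ff k = f_k (0<=k<=n-1), Zz = Z *)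
Inductive lbl := BR of nat | BI of nat | Ee of nat | Ff of nat | Zz.

Definition decode (n i : nat) : lbl :=
  if (i < n.-1)%N then BR i.+1
  else if (i < 2 * n.-1)%N then BI (i - n.-1).+1
  else if (i < 2 * n.-1 + n)%N then Ee (i - 2 * n.-1)
  else if (i < 2 * n.-1 + 2 * n)%N then Ff (i - 2 * n.-1 - n)
  else Zz.

Section Specific.
Variable R : realType.

Definition dlt (i j : nat) : R := if i == j then 1 else 0.

Definition cBR (a : nat) (c : R) : lbl -> R :=
  fun m => match m with BR b => if b == a then c else 0 | _ => 0 end.
Definition cBI (a : nat) (c : R) : lbl -> R :=
  fun m => match m with BI b => if b == a then c else 0 | _ => 0 end.
Definition cZ (c : R) : lbl -> R :=
  fun m => match m with Zz => c | _ => 0 end.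
Definition c0 : lbl -> R := fun _ => 0.

(* Mixed brackets, complex form: [B, E_k] = sum_j (alRe B k j + i alIm B k j) E_j,
   E_j = e_j - i f_j. *)
Definition alRe (B : lbl) (k j : nat) : R :=
  match B with
  | BR a => if a == 1%N then - (dlt k 0 * dlt j 1) - dlt k 1 * dlt j 0
            else - 2^-1 * (dlt k 0 + dlt k 1) * dlt j a
                 - 2^-1 * dlt k a * (dlt j 0 - dlt j 1)
  | _ => 0
  end.
Definition alIm (B : lbl) (k j : nat) : R :=
  match B with
  | BI a => if a == 1%N then - ((dlt k 0 + dlt k 1) * (dlt j 0 - dlt j 1))
            else 2^-1 * (dlt k 0 + dlt k 1) * dlt j a
                 - 2^-1 * dlt k a * (dlt j 0 - dlt j 1)
  | _ => 0
  end.

(* Real form: with al = p + i q, [B,e_k] - i [B,f_k] = sum_j (p + i q)(e_j - i f_j),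
   hence [B,e_k] = sum_j (p e_j + q f_j) and [B,f_k] = sum_j (p f_j - q e_j). *)
Definition brBe (B : lbl) (k : nat) : lbl -> R :=
  fun m => match m with
           | Ee j => alRe B k j | Ff j => alIm B k j | _ => 0 end.
Definition brBf (B : lbl) (k : nat) : lbl -> R :=
  fun m => match m with
           | Ff j => alRe B k j | Ee j => - alIm B k j | _ => 0 end.

Definition isB (x : lbl) : bool :=
  match x with BR _ | BI _ => true | _ => false end.

(* the listed brackets [x,y] (each unordered pair listed in at most one order) *)
Definition br0 (x y : lbl) : lbl -> R :=
  match x, y with
  | BR a, BI b =>
      if (a == 1%N) && (b == 1%N) then cBI 1 2
      else if (a == 1%N) && (2 <= b)%N then cBI b 1
      else if (2 <= a)%N && (a == b) then cBI 1 2^-1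
      else c0
  | BR a, BR b => if (a == 1%N) && (2 <= b)%N then cBR b 1 else c0
  | Ee a, Ff b =>
      if (a == 0%N) && (b == 0%N) then cZ 1
      else if (1 <= a)%N && (a == b) then cZ (-1)
      else c0
  | BR _, Ee k | BI _, Ee k => brBe x k
  | BR _, Ff k | BI _, Ff k => brBf x k
  | _, _ => c0
  end.

Definition brl (x y : lbl) : lbl -> R := fun m => br0 x y m - br0 y x m.

Definition lN (n : nat) : nat := (4 * n - 1)%N.

Definition lbrk (n : nat) (i j : 'I_(lN n)) : 'cV[R]_(lN n) :=
  \col_(k < lN n) brl (decode n i) (decode n j) (decode n k).

Definition gl (rho c : R) (x y : lbl) : R :=
  match x, y with
  | BR a, BR b => if a == b then
                    (if a == 1%N then (rho + c) / rho else (rho + c) / (4 * rho))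
                  else 0
  | BI a, BI b => if a == b then
                    (if a == 1%N then (rho + c) ^+ 3 / (rho ^+ 2 * (rho + 2 * c))
                     else (rho + c) / (4 * rho))
                  else 0
  | Ee a, Ee b | Ff a, Ff b =>
      if a == b then
        (if a == 0%N then (rho + 2 * c) / (4 * rho ^+ 2) else 1 / (4 * rho))
      else 0
  | Zz, Zz => (rho + c) / (4 * rho ^+ 2 * (rho + 2 * c))
  | BI a, Zz | Zz, BI a =>
      if a == 1%N then - (c * (rho + c)) / (2 * rho ^+ 2 * (rho + 2 * c)) else 0
  | _, _ => 0
  end.

Definition gram (n : nat) (rho c : R) : 'M[R]_(lN n) :=
  \matrix_(i, j) gl rho c (decode n i) (decode n j).

End Specific.

From HB Require Import structures.
From mathcomp Require Import all_boot all_order all_algebra.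
From mathcomp Require Import reals.
From mathcomp Require Import ring zify.
Import Order.TTheory GRing.Theory Num.Theory.
Local Open Scope ring_scope.
Set Implicit Arguments. Unset Strict Implicit. Unset Printing Implicit Defensive.

(* For c = 0 the given basis is orthogonal.  Dividing each basis vector by its norm,
   the structure constants become rational and independent of rho, because the bracket
   is graded by the weight (0 on b, 1 on the e_k and f_k, 2 on Z).  The Koszul formula
   then expresses the Ricci endomorphism through these rational constants.  Apart from
   the seven vectors B_1^R, B_1^I, e_0, e_1, f_0, f_1, Z, the basis consists of n - 2
   isomorphic blocks {B_a^R, B_a^I, e_a, f_a} that only interact through those seven, so
   each Ricci sum is an affine function of n - 2 whose two coefficients are finite
   rational sums, evaluated by computation.  The outcome is
   ric = -(2n + 4) Id + (2n + 2) W, where W multiplies each vector by its weight; W is a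
   derivation because the bracket is graded. *)

(* In an orthonormal frame [X_x] with [c x y z = g([X_x, X_y], X_z)], the Koszul
   formula reads [g(nabla_{X_x} X_y, X_z) = onb_conn c x y z], and [onb_ricci c y z]
   is [Ric(X_y, X_z)]. *)
Definition onb_conn (K : fieldType) (I : Type) (c : I -> I -> I -> K) (x y z : I) : K :=
  (c x y z - c y z x + c z x y) / 2.

Definition onb_ricci (K : fieldType) (I : finType) (c : I -> I -> I -> K) (y z : I) : K :=
  \sum_x \sum_k (onb_conn c y z k * onb_conn c x k x - onb_conn c x z k * onb_conn c y k x
                 - c x y k * onb_conn c k z x).

Lemma onb_ricci_reindex (K : fieldType) (I J : finType) (c : I -> I -> I -> K)
    (c' : J -> J -> J -> K) (h : J -> I) (y z : J) :
  bijective h -> (forall u v w, c (h u) (h v) (h w) = c' u v w) ->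
  onb_ricci c (h y) (h z) = onb_ricci c' y z.
Proof.
move=> h_bij cc'; rewrite /onb_ricci (reindex h) /=; last exact: onW_bij.
apply: eq_bigr => x _; rewrite (reindex h) /=; last exact: onW_bij.
by apply: eq_bigr => k _; rewrite /onb_conn !cc'.
Qed.

Lemma rmorph_onb_ricci (K L : fieldType) (I : finType) (f : {rmorphism K -> L})
    (c : I -> I -> I -> K) (y z : I) :
  f (onb_ricci c y z) = onb_ricci (fun u v w => f (c u v w)) y z.
Proof.
rewrite /onb_ricci /onb_conn rmorph_sum; apply: eq_bigr => x _.
rewrite rmorph_sum; apply: eq_bigr => k _.
by rewrite !(rmorphB, rmorphD, rmorphM, fmorphV, rmorph1).
Qed.

Section OrthogonalBasis.
Variables (R : realType) (N : nat) (brk : 'I_N -> 'I_N -> 'cV[R]_N) (s : 'I_N -> R).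
Local Notation C i j k := (brk i j k 0).

Definition normalized_const (i j k : 'I_N) : R := C i j k * s k / (s i * s j).

Lemma bas_coord (i k : 'I_N) : bas R i k 0 = (k == i)%:R.
Proof. by rewrite /bas mxE andbT. Qed.

Lemma sum_bas_coord (i : 'I_N) (f : 'I_N -> R) : \sum_k bas R i k 0 * f k = f i.
Proof.
rewrite (bigD1 i) //= big1 ?addr0 => [|k /negbTE ki]; first by rewrite bas_coord eqxx mul1r.
by rewrite bas_coord ki mul0r.
Qed.

Lemma lbr_coord (x y : 'cV[R]_N) k :
  lbr brk x y k 0 = \sum_i \sum_j x i 0 * y j 0 * C i j k.
Proof.
rewrite /lbr summxE; apply: eq_bigr => i _; rewrite summxE.
by apply: eq_bigr => j _; rewrite mxE.
Qed.

Lemma sum_basl (a : 'I_N) (v : 'cV[R]_N) (F : 'I_N -> 'I_N -> R) :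
  \sum_i \sum_j bas R a i 0 * v j 0 * F i j = \sum_j v j 0 * F a j.
Proof.
rewrite -(sum_bas_coord a (fun i => \sum_j v j 0 * F i j)).
by apply: eq_bigr => i _; rewrite big_distrr; apply: eq_bigr => j _; rewrite /= mulrA.
Qed.

Lemma sum_basr (v : 'cV[R]_N) (b : 'I_N) (F : 'I_N -> 'I_N -> R) :
  \sum_i \sum_j v i 0 * bas R b j 0 * F i j = \sum_i v i 0 * F i b.
Proof.
apply: eq_bigr => i _; rewrite -(sum_bas_coord b (fun j => v i 0 * F i j)).
by apply: eq_bigr => j _; ring.
Qed.

Lemma lbr_basl (l : 'I_N) (x : 'cV[R]_N) k : lbr brk (bas R l) x k 0 = \sum_j x j 0 * C l j k.
Proof. by rewrite lbr_coord sum_basl. Qed.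

Lemma lbr_basr (x : 'cV[R]_N) (l : 'I_N) k : lbr brk x (bas R l) k 0 = \sum_i x i 0 * C i l k.
Proof. by rewrite lbr_coord sum_basr. Qed.

Variable G : 'M[R]_N.
Hypothesis s_neq0 : forall i, s i != 0.
Hypothesis G_diag : G = diag_mx (\row_i s i ^+ 2).

Lemma gform_diag (x y : 'cV[R]_N) : gform G x y = \sum_k x k 0 * s k ^+ 2 * y k 0.
Proof.
by rewrite /gform G_diag mul_mx_diag mxE; apply: eq_bigr => k _; rewrite !mxE.
Qed.

Lemma invmx_diag_gram : invmx G^T = diag_mx (\row_i (s i ^+ 2)^-1).
Proof.
have GV1 : G^T *m diag_mx (\row_i (s i ^+ 2)^-1) = 1%:M.
  rewrite G_diag tr_diag_mx mulmx_diag -diag_const_mx; congr diag_mx.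
  by apply/rowP => i; rewrite !mxE mulfV // expf_neq0.
have [G_unit _] := mulmx1_unit GV1.
by rewrite -[LHS]mulmx1 -GV1 mulmxA mulVmx // mul1mx.
Qed.

Local Notation Gam a b l := (s a * s b / s l * onb_conn normalized_const a b l).

Lemma koszul_bas (x y : 'cV[R]_N) l : koszul brk G x y (bas R l) =
  \sum_i \sum_j x i 0 * y j 0 * (C i j l * s l ^+ 2 - C j l i * s i ^+ 2 + C l i j * s j ^+ 2) / 2.
Proof.
rewrite /koszul !gform_diag.
have E1 : \sum_k lbr brk x y k 0 * s k ^+ 2 * bas R l k 0 =
          \sum_i \sum_j x i 0 * y j 0 * (C i j l * s l ^+ 2).
  under eq_bigr => k _ do rewrite mulrC.
  rewrite sum_bas_coord lbr_coord big_distrl; apply: eq_bigr => i _.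
  by rewrite big_distrl; apply: eq_bigr => j _; rewrite /= mulrA.
have E2 : \sum_k lbr brk y (bas R l) k 0 * s k ^+ 2 * x k 0 =
          \sum_i \sum_j x i 0 * y j 0 * (C j l i * s i ^+ 2).
  apply: eq_bigr => i _; rewrite lbr_basr !big_distrl.
  by apply: eq_bigr => j _; rewrite /=; ring.
have E3 : \sum_k lbr brk (bas R l) x k 0 * s k ^+ 2 * y k 0 =
          \sum_i \sum_j x i 0 * y j 0 * (C l i j * s j ^+ 2).
  rewrite [RHS]exchange_big; apply: eq_bigr => j _; rewrite lbr_basl !big_distrl.
  by apply: eq_bigr => i _; rewrite /=; ring.
rewrite E1 E2 E3 -sumrB -big_split mulrC big_distrl; apply: eq_bigr => i _.
rewrite /= -sumrB -big_split big_distrl; apply: eq_bigr => j _; rewrite /=; ring.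
Qed.

Lemma nabla_coord (x y : 'cV[R]_N) l :
  nabla brk G x y l 0 = \sum_i \sum_j x i 0 * y j 0 * Gam i j l.
Proof.
rewrite /nabla invmx_diag_gram mul_diag_mx !mxE koszul_bas big_distrr.
apply: eq_bigr => i _; rewrite big_distrr; apply: eq_bigr => j _.
by rewrite /= /onb_conn /normalized_const; field; rewrite !s_neq0.
Qed.

Lemma nabla_basl a (v : 'cV[R]_N) l : nabla brk G (bas R a) v l 0 = \sum_j v j 0 * Gam a j l.
Proof. by rewrite nabla_coord sum_basl. Qed.

Lemma nabla_basr (v : 'cV[R]_N) b l : nabla brk G v (bas R b) l 0 = \sum_i v i 0 * Gam i b l.
Proof. by rewrite nabla_coord sum_basr. Qed.

Lemma nabla_bas a b l : nabla brk G (bas R a) (bas R b) l 0 = Gam a b l.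
Proof. by rewrite nabla_basl sum_bas_coord. Qed.

Lemma lbr_bas a b : lbr brk (bas R a) (bas R b) = brk a b.
Proof.
apply/matrixP => k c; rewrite (ord1 c) lbr_coord.
by rewrite (sum_basl a _ (fun i j => C i j k)) sum_bas_coord.
Qed.

Lemma curv_coord (a b c : 'cV[R]_N) l : curv brk G a b c l 0 =
  nabla brk G a (nabla brk G b c) l 0 - nabla brk G b (nabla brk G a c) l 0
  - nabla brk G (lbr brk a b) c l 0.
Proof.
(* Generalizing the [nabla] terms stops [mxE] from unfolding them. *)
rewrite /curv; move: (nabla brk G a _) (nabla brk G b _) (nabla brk G (lbr brk a b) c) => u v w.
by rewrite !mxE.
Qed.

Lemma ricci_endo_orthogonal i j :
  ricci_endo brk G i j = s j / s i * onb_ricci normalized_const j i.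
Proof.
rewrite /ricci_endo invmx_diag_gram mul_diag_mx !mxE /ricci_form /onb_ricci !big_distrr /=.
apply: eq_bigr => x _.
rewrite curv_coord (nabla_basl x _ x) (nabla_basl j _ x) (nabla_basr _ i x) lbr_bas.
rewrite -!sumrB !big_distrr /=; apply: eq_bigr => k _.
rewrite (nabla_bas j i k) (nabla_bas x i k) /=.
by rewrite /onb_conn /normalized_const; field; rewrite !s_neq0.
Qed.

End OrthogonalBasis.

Lemma graded_derivation (R : realType) (N : nat) (brk : 'I_N -> 'I_N -> 'cV[R]_N)
    (w : 'I_N -> nat) (a : R) :
  (forall i j k, w k != (w i + w j)%N -> brk i j k 0 = 0) ->
  is_derivation brk (diag_mx (\row_i (a * (w i)%:R))).
Proof.
move=> graded x y; apply/matrixP => l c; rewrite (ord1 c) !mul_diag_mx !mxE !lbr_coord.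
rewrite big_distrr -big_split; apply: eq_bigr => i _.
rewrite big_distrr -big_split; apply: eq_bigr => j _; rewrite /= !mxE.
have [->|w_ij] := eqVneq (w l) (w i + w j)%N; first by rewrite natrD; ring.
by rewrite graded // !mulr0 addr0.
Qed.

(* The bracket [brl], verbatim but over an arbitrary field, so that its rational
   instance can be evaluated. *)
Module OverField.
Section Brackets.
Variable F : fieldType.

Definition dlt (i j : nat) : F := if i == j then 1 else 0.
Definition cBR (a : nat) (c : F) : lbl -> F :=
  fun m => match m with BR b => if b == a then c else 0 | _ => 0 end.
Definition cBI (a : nat) (c : F) : lbl -> F :=
  fun m => match m with BI b => if b == a then c else 0 | _ => 0 end.
Definition cZ (c : F) : lbl -> F :=
  fun m => match m with Zz => c | _ => 0 end.
Definition c0 : lbl -> F := fun _ => 0.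
Definition alRe (B : lbl) (k j : nat) : F :=
  match B with
  | BR a => if a == 1%N then - (dlt k 0 * dlt j 1) - dlt k 1 * dlt j 0
            else - 2^-1 * (dlt k 0 + dlt k 1) * dlt j a
                 - 2^-1 * dlt k a * (dlt j 0 - dlt j 1)
  | _ => 0
  end.
Definition alIm (B : lbl) (k j : nat) : F :=
  match B with
  | BI a => if a == 1%N then - ((dlt k 0 + dlt k 1) * (dlt j 0 - dlt j 1))
            else 2^-1 * (dlt k 0 + dlt k 1) * dlt j a
                 - 2^-1 * dlt k a * (dlt j 0 - dlt j 1)
  | _ => 0
  end.
Definition brBe (B : lbl) (k : nat) : lbl -> F :=
  fun m => match m with
           | Ee j => alRe B k j | Ff j => alIm B k j | _ => 0 end.
Definition brBf (B : lbl) (k : nat) : lbl -> F :=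
  fun m => match m with
           | Ff j => alRe B k j | Ee j => - alIm B k j | _ => 0 end.
Definition br0 (x y : lbl) : lbl -> F :=
  match x, y with
  | BR a, BI b =>
      if (a == 1%N) && (b == 1%N) then cBI 1 2
      else if (a == 1%N) && (2 <= b)%N then cBI b 1
      else if (2 <= a)%N && (a == b) then cBI 1 2^-1
      else c0
  | BR a, BR b => if (a == 1%N) && (2 <= b)%N then cBR b 1 else c0
  | Ee a, Ff b =>
      if (a == 0%N) && (b == 0%N) then cZ 1
      else if (1 <= a)%N && (a == b) then cZ (-1)
      else c0
  | BR _, Ee k | BI _, Ee k => brBe x k
  | BR _, Ff k | BI _, Ff k => brBf x k
  | _, _ => c0
  end.
Definition brl (x y : lbl) : lbl -> F := fun m => br0 x y m - br0 y x m.

End Brackets.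
(* Kept folded by [simpl] so that the morphism lemmas below can rewrite them. *)
Arguments dlt : simpl never.
Arguments alRe : simpl never.
Arguments alIm : simpl never.
End OverField.

Lemma brl_over_field (R : realType) : brl R = OverField.brl R.
Proof. by []. Qed.

Section FieldMorphism.
Variables (F K : fieldType) (f : {rmorphism F -> K}).

Lemma dlt_rmorph i j : f (OverField.dlt F i j) = OverField.dlt K i j.
Proof. by rewrite /OverField.dlt [LHS]fun_if rmorph1 rmorph0. Qed.

Lemma alRe_rmorph B k j : f (OverField.alRe F B k j) = OverField.alRe K B k j.
Proof.
case: B => [a|a|a|a|] /=; rewrite ?rmorph0 // [LHS]fun_if.
by rewrite !(rmorphB, rmorphD, rmorphM, rmorphN, fmorphV, rmorph1, dlt_rmorph).
Qed.

Lemma alIm_rmorph B k j : f (OverField.alIm F B k j) = OverField.alIm K B k j.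
Proof.
case: B => [a|a|a|a|] /=; rewrite ?rmorph0 // [LHS]fun_if.
by rewrite !(rmorphB, rmorphD, rmorphM, rmorphN, fmorphV, rmorph1, dlt_rmorph).
Qed.

Lemma br0_rmorph x y w : f (OverField.br0 F x y w) = OverField.br0 K x y w.
Proof.
rewrite /OverField.br0 /OverField.brBe /OverField.brBf /OverField.cBR /OverField.cBI
        /OverField.cZ /OverField.c0.
case: x => [a|a|a|a|]; case: y => [b|b|b|b|]; rewrite ?if_arg; case: w => [c|c|c|c|] /=;
by rewrite ?rmorphN ?alRe_rmorph ?alIm_rmorph ?(fun_if f)
           ?(rmorph0, rmorph1, rmorphN, rmorph_nat, fmorphV).
Qed.

Lemma brl_rmorph x y w : f (OverField.brl F x y w) = OverField.brl K x y w.
Proof. by rewrite /OverField.brl rmorphB !br0_rmorph. Qed.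

End FieldMorphism.

Definition weight (l : lbl) : nat :=
  match l with BR _ | BI _ => 0 | Ee _ | Ff _ => 1 | Zz => 2 end.

Lemma brl_graded (F : fieldType) x y w :
  weight w != (weight x + weight y)%N -> OverField.brl F x y w = 0.
Proof.
rewrite /OverField.brl /OverField.br0 /OverField.brBe /OverField.brBf /OverField.cBR
        /OverField.cBI /OverField.cZ /OverField.c0.
case: x => [a|a|a|a|]; case: y => [b|b|b|b|]; case: w => [c|c|c|c|] //= _;
by repeat case: ifP => _; rewrite ?subrr ?subr0 ?sub0r ?oppr0.
Qed.

(* [bindex m] indexes the basis when [n = m + 2]: seven vectors [B_1^R, B_1^I, e_0, e_1,
   f_0, f_1, Z] and, for each [a] in [2 .. n-1], a block [B_a^R, B_a^I, e_a, f_a].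
   [model_lbl (pos x)] is the vector in the position of [x] within the block [a = 2]. *)
Section Labels.
Variable m : nat.

Definition bindex := ('I_7 + 'I_m * 'I_4)%type.

Definition lbl_of (x : bindex) : lbl :=
  match x with
  | inl p => nth Zz [:: BR 1; BI 1; Ee 0; Ee 1; Ff 0; Ff 1; Zz] p
  | inr (a, t) => nth Zz [:: BR a.+2; BI a.+2; Ee a.+2; Ff a.+2] t
  end.

Definition pos (x : bindex) : nat := match x with inl p => p | inr (_, t) => 7 + t end.

Definition block (x : bindex) : option nat :=
  match x with inl _ => None | inr (a, _) => Some (nat_of_ord a) end.

End Labels.

Definition model_lbl (p : nat) : lbl :=
  nth Zz [:: BR 1; BI 1; Ee 0; Ee 1; Ff 0; Ff 1; Zz; BR 2; BI 2; Ee 2; Ff 2] p.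

(* A bracket between basis vectors can only be nonzero when all three vectors are
   outside the blocks, or two of them lie in the same block and the third outside. *)
Definition blocks_compatible (u v w : option nat) : bool :=
  match u, v, w with
  | None, None, None => true
  | Some a, Some b, None | Some a, None, Some b | None, Some a, Some b => a == b
  | _, _, _ => false
  end.

Lemma blocks_compatible_rot u v w : blocks_compatible u v w = blocks_compatible v w u.
Proof. by case: u => [a|]; case: v => [b|]; case: w => [c|] //=; rewrite eq_sym. Qed.

Lemma blocks_compatible_trace (u v w : option nat) :
  blocks_compatible u u w && blocks_compatible v w v = (w == None).
Proof. by case: u => [a|]; case: v => [b|]; case: w => [c|] //=; rewrite !eqxx ?andbT. Qed.

Lemma blocks_compatible_swap (u v w : option nat) :
  blocks_compatible v u w && blocks_compatible w u v =
  blocks_compatible v u w && blocks_compatible u w v.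
Proof.
by case: u => [a|]; case: v => [b|]; case: w => [c|] //=;
   rewrite ?andbF //; case: eqP => [->|]; rewrite ?eqxx //; case: eqP.
Qed.

Lemma blocks_compatible_split (u u' v w : option nat) : u != u' ->
  [/\ blocks_compatible u u' w && blocks_compatible v w v = false,
      blocks_compatible v u' w && blocks_compatible u w v = false &
      blocks_compatible v u w && blocks_compatible w u' v = false].
Proof.
case: u => [a|]; case: u' => [b|]; case: v => [c|]; case: w => [d|] //= /eqP ab;
  split; repeat case: eqP => //; move=> *; congruence.
Qed.

Definition compatible m (x y w : bindex m) : bool :=
  blocks_compatible (block x) (block y) (block w).

Ltac case_ord p Hp k :=
  match k with
  | O => by []
  | S ?k' => case: p Hp => [|p] Hp; last case_ord p Hp k'
  end.

Ltac case_bindex :=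
  let p := fresh "p" in let a := fresh "a" in let t := fresh "t" in let Hp := fresh "Hp" in
  case=> [[p Hp]|[a [t Hp]]]; [case_ord p Hp 7%N | case_ord t Hp 4%N].

Section BlockPattern.
Variables (F : fieldType) (m : nat).

Lemma ord_neq_val (a b : 'I_m) : a != b -> ((a : nat) == b) = false /\ ((b : nat) == a) = false.
Proof. by move=> ab; rewrite !(inj_eq val_inj) (negbTE ab) eq_sym (negbTE ab). Qed.

Ltac case_ord_eq :=
  match goal with |- context [(nat_of_ord ?a == nat_of_ord ?b)%N] =>
    let ab := fresh "ab" in let E1 := fresh "E" in let E2 := fresh "E" in
    case: (eqVneq a b) => [<-|ab]; [rewrite eqxx | have [E1 E2] := ord_neq_val ab; rewrite E1 ?E2]
  end.

Ltac solve_pattern :=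
  rewrite /compatible /OverField.brl /= ?eqSS; repeat case_ord_eq; rewrite /=; try reflexivity;
  rewrite /OverField.br0 /OverField.brBe /OverField.brBf /OverField.cBR /OverField.cBI
          /OverField.cZ /OverField.c0 /OverField.alRe /OverField.alIm /OverField.dlt
          /= ?eqSS ?eqxx /=;
  repeat match goal with E : (?u == ?v) = false |- context [?u == ?v] => rewrite E end;
  try reflexivity;
  rewrite ?(mul0r, mulr0, add0r, addr0, subr0, sub0r, oppr0, mulr1, mul1r, subrr); try reflexivity;
  ring.

Local Notation pattern x y w :=
  (OverField.brl F (lbl_of x) (lbl_of y) (lbl_of w) =
   if compatible x y w
   then OverField.brl F (model_lbl (pos x)) (model_lbl (pos y)) (model_lbl (pos w)) else 0).

Lemma brl_block_pattern_core (p : 'I_7) (y w : bindex m) : pattern (inl p : bindex m) y w.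
Proof.
by case: p => p Hp; move: y w; case_ord p Hp 7%N; case_bindex; case_bindex; solve_pattern.
Qed.

Lemma brl_block_pattern_block (a : 'I_m) (t : 'I_4) (y w : bindex m) :
  pattern (inr (a, t) : bindex m) y w.
Proof.
by case: t => t Ht; move: y w; case_ord t Ht 4%N; case_bindex; case_bindex; solve_pattern.
Qed.

Lemma brl_block_pattern (x y w : bindex m) : pattern x y w.
Proof.
by case: x => [p|[a t]]; [exact: brl_block_pattern_core | exact: brl_block_pattern_block].
Qed.

End BlockPattern.

Section BindexSums.
Variables (K : pzRingType) (m : nat).
Local Notation bindex := (bindex m).

Lemma sum_bindex (f : bindex -> K) :
  \sum_x f x = \sum_(p < 7) f (inl p) + \sum_(a < m) \sum_(t < 4) f (inr (a, t)).
Proof. by rewrite big_sumType pair_big; congr (_ + _); apply: eq_bigr => -[]. Qed.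

Lemma sum_ord_delta (b : 'I_m) (P : 'I_m -> bool) (F : 'I_m -> K) :
  (forall c, P c = (c == b)) -> \sum_c (P c)%:R * F c = F b.
Proof.
move=> PE; rewrite (bigD1 b) //= PE eqxx mul1r big1 ?addr0 // => c /negbTE cb.
by rewrite PE cb mul0r.
Qed.

Lemma sum_ord_const (c : K) : \sum_(a < m) c = m%:R * c.
Proof. by rewrite sumr_const card_ord mulr_natl. Qed.

Lemma sum_bindex_core_snd (h : nat -> nat -> K) :
  \sum_(x : bindex) \sum_(k : bindex) (block k == None)%:R * h (pos x) (pos k) =
  \sum_(q < 7) (\sum_(p < 7) h p q + m%:R * \sum_(s < 4) h (7 + s)%N q).
Proof.
rewrite exchange_big sum_bindex /= [X in _ + X]big1 ?addr0 => [|a _]; last first.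
  by apply: big1 => t _; apply: big1 => x _; rewrite mul0r.
apply: eq_bigr => q _; rewrite sum_bindex /= -sum_ord_const; congr (_ + _).
  by apply: eq_bigr => p _; rewrite mul1r.
by apply: eq_bigr => a _; apply: eq_bigr => t _; rewrite mul1r.
Qed.

Lemma sum_bindex_pair_core (h : nat -> nat -> K) :
  \sum_(x : bindex) \sum_(k : bindex)
    (blocks_compatible (block x) None (block k) && blocks_compatible None (block k) (block x))%:R
    * h (pos x) (pos k) =
  \sum_(p < 7) \sum_(q < 7) h p q + m%:R * \sum_(s < 4) \sum_(u < 4) h (7 + s)%N (7 + u)%N.
Proof.
rewrite sum_bindex /=; congr (_ + _).
  apply: eq_bigr => p _; rewrite sum_bindex /= [X in _ + X]big1 ?addr0 => [|b _]; last first.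
    by apply: big1 => u _; rewrite mul0r.
  by apply: eq_bigr => q _; rewrite mul1r.
rewrite -sum_ord_const; apply: eq_bigr => a _; apply: eq_bigr => s _.
rewrite sum_bindex /= big1 ?add0r => [|q _]; last by rewrite mul0r.
under eq_bigr => b _ do rewrite -mulr_sumr.
by apply: sum_ord_delta => b; rewrite eq_sym andbb val_eqE.
Qed.

Lemma sum_bindex_pair_block (b : 'I_m) (h : nat -> nat -> K) :
  \sum_(x : bindex) \sum_(k : bindex)
    (blocks_compatible (block x) (Some (nat_of_ord b)) (block k)
     && blocks_compatible (Some (nat_of_ord b)) (block k) (block x))%:R * h (pos x) (pos k) =
  \sum_(p < 7) \sum_(u < 4) h p (7 + u)%N + \sum_(s < 4) \sum_(q < 7) h (7 + s)%N q.
Proof.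
rewrite sum_bindex /=; congr (_ + _).
  apply: eq_bigr => p _; rewrite sum_bindex /= big1 ?add0r => [|q _]; last by rewrite mul0r.
  under eq_bigr => c _ do rewrite -mulr_sumr.
  by apply: sum_ord_delta => c; rewrite andbb eq_sym val_eqE.
rewrite -(@sum_ord_delta b (fun a => (nat_of_ord a == b) && (nat_of_ord b == a))
           (fun=> \sum_(s < 4) \sum_(q < 7) h (7 + s)%N q)) => [|a]; last first.
  by rewrite eq_sym andbb val_eqE.
apply: eq_bigr => a _; rewrite mulr_sumr; apply: eq_bigr => s _.
rewrite sum_bindex /= [X in _ + X]big1 ?addr0 ?mulr_sumr // => c _.
by apply: big1 => u _; rewrite mul0r.
Qed.

End BindexSums.

Lemma mulr_natb_and (K : comPzRingType) (a b : bool) (u v : K) :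
  (a%:R * u) * (b%:R * v) = (a && b)%:R * (u * v).
Proof. by case: a; case: b; rewrite ?mul0r ?mulr0 ?mul1r. Qed.

(* [\sum] is locked, so the finite sums evaluated by [vm_compute] below use [qsum]. *)
Definition qsum (n : nat) (F : nat -> rat) : rat := foldr (fun i acc => F i + acc) 0 (iota 0 n).

Lemma big_ord_qsum n (F : nat -> rat) : \sum_(i < n) F i = qsum n F.
Proof.
rewrite -(big_mkord xpredT) /index_iota subn0 /qsum unlock.
by elim: (iota 0 n) => //= i s ->.
Qed.

Lemma big_ord_qsum2 a b (F : nat -> nat -> rat) :
  \sum_(i < a) \sum_(j < b) F i j = qsum a (fun i => qsum b (F i)).
Proof. by rewrite -big_ord_qsum; apply: eq_bigr => i _; rewrite big_ord_qsum. Qed.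

Definition brlQ : lbl -> lbl -> lbl -> rat := OverField.brl rat.

Definition norm_coef (l : lbl) : rat :=
  match l with BR a | BI a => if a == 1%N then 1 else 2^-1 | _ => 2^-1 end.

Definition onb_brl (u v w : lbl) : rat := brlQ u v w * norm_coef w / (norm_coef u * norm_coef v).

Definition model_const (p q r : nat) : rat := onb_brl (model_lbl p) (model_lbl q) (model_lbl r).

Definition ricci_term1 (p k q r : nat) : rat :=
  onb_conn model_const q r k * onb_conn model_const p k p.

Definition ricci_term23 (p k q r : nat) : rat :=
  onb_conn model_const p r k * onb_conn model_const q k p
  + model_const p q k * onb_conn model_const k r p.

Definition core_const (p q : nat) : rat :=
  qsum 7 (fun k => qsum 7 (fun x => ricci_term1 x k p q))
  - qsum 7 (fun x => qsum 7 (fun k => ricci_term23 x k p q)).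

Definition core_lin (p q : nat) : rat :=
  qsum 7 (fun k => qsum 4 (fun s => ricci_term1 (7 + s) k p q))
  - qsum 4 (fun s => qsum 4 (fun u => ricci_term23 (7 + s) (7 + u) p q)).

Definition block_const (p q : nat) : rat :=
  qsum 7 (fun k => qsum 7 (fun x => ricci_term1 x k p q))
  - (qsum 7 (fun x => qsum 4 (fun u => ricci_term23 x (7 + u) p q))
     + qsum 4 (fun s => qsum 7 (fun k => ricci_term23 (7 + s) k p q))).

Definition block_lin (p q : nat) : rat :=
  qsum 7 (fun k => qsum 4 (fun s => ricci_term1 (7 + s) k p q)).

Definition diag_const (p : nat) : rat := 6 * (weight (model_lbl p))%:R - 8.
Definition diag_lin (p : nat) : rat := 2 * (weight (model_lbl p))%:R - 2.

Definition model_ricci_check : bool :=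
  all (fun p => all (fun q => (core_const p q == (p == q)%:R * diag_const p)
                              && (core_lin p q == (p == q)%:R * diag_lin p))
                    (iota 0 7)) (iota 0 7)
  && all (fun p => all (fun q => (block_const p q == (p == q)%:R * diag_const p)
                                 && (block_lin p q == (p == q)%:R * diag_lin p))
                       (iota 7 4)) (iota 7 4).

Lemma model_ricci_checked : model_ricci_check.
Proof. by vm_compute. Qed.

Lemma model_ricci_core p q : (p < 7)%N -> (q < 7)%N ->
  core_const p q = (p == q)%:R * diag_const p /\ core_lin p q = (p == q)%:R * diag_lin p.
Proof.
move=> hp hq; have /andP[/allP/(_ p) + _] := model_ricci_checked.
rewrite mem_iota hp => /(_ isT) /allP/(_ q); rewrite mem_iota hq => /(_ isT).
by case/andP => /eqP -> /eqP ->.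
Qed.

Lemma model_ricci_block p q : (7 <= p < 11)%N -> (7 <= q < 11)%N ->
  block_const p q = (p == q)%:R * diag_const p /\ block_lin p q = (p == q)%:R * diag_lin p.
Proof.
move=> hp hq; have /andP[_ /allP/(_ p)] := model_ricci_checked.
rewrite mem_iota hp => /(_ isT) /allP/(_ q); rewrite mem_iota hq => /(_ isT).
by case/andP => /eqP -> /eqP ->.
Qed.

Section RationalRicci.
Variable m : nat.
Local Notation bindex := (bindex m).

Definition bindex_const (x y w : bindex) : rat := onb_brl (lbl_of x) (lbl_of y) (lbl_of w).

Lemma norm_coef_pos (x : bindex) : norm_coef (lbl_of x) = norm_coef (model_lbl (pos x)).
Proof. by move: x; case_bindex. Qed.

Lemma weight_pos (x : bindex) : weight (lbl_of x) = weight (model_lbl (pos x)).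
Proof. by move: x; case_bindex. Qed.

Lemma bindex_const_pattern x y w :
  bindex_const x y w = (compatible x y w)%:R * model_const (pos x) (pos y) (pos w).
Proof.
rewrite /bindex_const /onb_brl /brlQ brl_block_pattern !norm_coef_pos.
by case: compatible; rewrite ?mul1r ?mul0r.
Qed.

Lemma onb_conn_pattern x y w :
  onb_conn bindex_const x y w =
  (compatible x y w)%:R * onb_conn model_const (pos x) (pos y) (pos w).
Proof.
rewrite /onb_conn !bindex_const_pattern /compatible -(blocks_compatible_rot (block x)).
rewrite (blocks_compatible_rot (block w)).
by case: blocks_compatible; rewrite ?mul1r ?mul0r ?subrr ?add0r ?mul0r.
Qed.

Lemma onb_ricci_same_block (y z : bindex) : block y = block z ->
  onb_ricci bindex_const y z = \sum_(x : bindex) \sum_(k : bindex)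
    ((block k == None)%:R * ricci_term1 (pos x) (pos k) (pos y) (pos z)
     - (blocks_compatible (block x) (block y) (block k)
        && blocks_compatible (block y) (block k) (block x))%:R
       * ricci_term23 (pos x) (pos k) (pos y) (pos z)).
Proof.
move=> yz; apply: eq_bigr => x _; apply: eq_bigr => k _.
rewrite !onb_conn_pattern bindex_const_pattern /compatible -yz !mulr_natb_and.
rewrite blocks_compatible_trace blocks_compatible_swap /ricci_term1 /ricci_term23.
by rewrite mulrDr opprD addrA.
Qed.

Lemma onb_ricci_split (y z : bindex) : block y != block z -> onb_ricci bindex_const y z = 0.
Proof.
move=> yz; apply: big1 => x _; apply: big1 => k _.
rewrite !onb_conn_pattern bindex_const_pattern /compatible !mulr_natb_and.
by have [-> -> ->] := blocks_compatible_split (block x) (block k) yz; rewrite !mul0r !subr0.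
Qed.

Lemma sum_double_sub (F G : bindex -> bindex -> rat) :
  \sum_x \sum_k (F x k - G x k) = \sum_x \sum_k F x k - \sum_x \sum_k G x k.
Proof. by rewrite -sumrB; apply: eq_bigr => x _; rewrite sumrB. Qed.

Lemma onb_ricci_core (p q : 'I_7) :
  onb_ricci bindex_const (inl p) (inl q) = core_const p q + m%:R * core_lin p q.
Proof.
rewrite onb_ricci_same_block // sum_double_sub.
rewrite (sum_bindex_core_snd m (fun a b => ricci_term1 a b p q)).
rewrite (sum_bindex_pair_core m (fun a b => ricci_term23 a b p q)).
rewrite big_split /= -mulr_sumr (big_ord_qsum2 7 7 (fun k x => ricci_term1 x k p q))
  (big_ord_qsum2 7 4 (fun k s => ricci_term1 (7 + s) k p q))
  (big_ord_qsum2 7 7 (fun x k => ricci_term23 x k p q))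
  (big_ord_qsum2 4 4 (fun s u => ricci_term23 (7 + s) (7 + u) p q)) /=.
by rewrite /core_const /core_lin; ring.
Qed.

Lemma onb_ricci_block (b : 'I_m) (t t' : 'I_4) :
  onb_ricci bindex_const (inr (b, t)) (inr (b, t')) =
  block_const (7 + t) (7 + t') + m%:R * block_lin (7 + t) (7 + t').
Proof.
rewrite onb_ricci_same_block // sum_double_sub.
rewrite (sum_bindex_core_snd m (fun a c => ricci_term1 a c (7 + t) (7 + t'))).
rewrite (sum_bindex_pair_block b (fun a c => ricci_term23 a c (7 + t) (7 + t'))).
rewrite big_split /= -mulr_sumr.
rewrite (big_ord_qsum2 7 7 (fun k x => ricci_term1 x k (7 + t) (7 + t')))
  (big_ord_qsum2 7 4 (fun k s => ricci_term1 (7 + s) k (7 + t) (7 + t')))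
  (big_ord_qsum2 7 4 (fun x u => ricci_term23 x (7 + u) (7 + t) (7 + t')))
  (big_ord_qsum2 4 7 (fun s k => ricci_term23 (7 + s) k (7 + t) (7 + t'))) /=.
by rewrite /block_const /block_lin; ring.
Qed.

Lemma onb_ricci_bindex (y z : bindex) :
  onb_ricci bindex_const y z =
  (y == z)%:R * ((2 * m + 6)%:R * (weight (lbl_of y))%:R - (2 * m + 8)%:R).
Proof.
suff -> : onb_ricci bindex_const y z = (y == z)%:R * (diag_const (pos y) + m%:R * diag_lin (pos y)).
  by rewrite weight_pos /diag_const /diag_lin !(natrD, natrM); ring.
have [yz|yz] := eqVneq (block y) (block z); last first.
  have /negbTE yz' : y != z by apply: contraNneq yz => ->.
  by rewrite onb_ricci_split // yz' mul0r.
case: y yz => [p|[b t]]; case: z => [q|[b' t']] //= yz.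
  rewrite onb_ricci_core; have [-> ->] := model_ricci_core (ltn_ord p) (ltn_ord q).
  by rewrite mulrCA -mulrDr.
have {yz} <- : b = b' by apply: val_inj; case: yz.
rewrite onb_ricci_block.
have hb (u : 'I_4) : (7 <= 7 + u < 11)%N by rewrite leq_addr ltn_add2l ltn_ord.
have [-> ->] := model_ricci_block (hb t) (hb t').
by rewrite mulrCA -mulrDr eqn_add2l -[inr _ == _]/((b == b) && (t == t')) eqxx.
Qed.

End RationalRicci.

Section Indexing.
Variable m : nat.
Local Notation n := m.+2.

Lemma lN_SS : lN n = (7 + 4 * m)%N.
Proof. rewrite /lN; lia. Qed.

Definition lbl_index (l : lbl) : nat :=
  match l with
  | BR a => a.-1 | BI a => (m.+1 + a.-1)%N | Ee k => (2 * m.+1 + k)%N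
  | Ff k => (2 * m.+1 + n + k)%N | Zz => (2 * m.+1 + 2 * n)%N
  end.

Lemma lbl_index_lt (x : bindex m) : (lbl_index (lbl_of x) < lN n)%N.
Proof.
rewrite lN_SS; move: x; case_bindex => /=; try lia.
all: match goal with a : 'I_m |- _ => have := ltn_ord a; lia end.
Qed.

Lemma decode_lbl_index (x : bindex m) : decode n (lbl_index (lbl_of x)) = lbl_of x.
Proof.
move: x; case_bindex => //=.
all: try match goal with a : 'I_m |- _ => have Ha := ltn_ord a end.
all: rewrite /decode /=; repeat case: ifP => ?; try lia; try reflexivity; f_equal; lia.
Qed.

Lemma lbl_of_inj : injective (@lbl_of m).
Proof.
move=> x y; move: x y; case_bindex; case_bindex => //= E; try (case: E => E);
  try (congr inr; congr pair; apply: val_inj; lia).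
all: try by congr inl; apply: val_inj.
all: by move/val_inj: E => ->; congr inr; congr pair; exact: val_inj.
Qed.

Definition bindex_ord (x : bindex m) : 'I_(lN n) := Ordinal (lbl_index_lt x).

Lemma decode_bindex_ord (x : bindex m) : decode n (bindex_ord x) = lbl_of x.
Proof. exact: decode_lbl_index. Qed.

Lemma bindex_ord_bij : bijective bindex_ord.
Proof.
apply: inj_card_bij => [x y /(congr1 (decode n \o val))|].
  by rewrite /= !decode_bindex_ord => /lbl_of_inj.
by rewrite card_sum card_prod !card_ord lN_SS; lia.
Qed.

Lemma decode_ord_inj (i j : 'I_(lN n)) : decode n i = decode n j -> i = j.
Proof.
case: bindex_ord_bij => g gK Kg; rewrite -(Kg i) -(Kg j) !decode_bindex_ord.
by move/lbl_of_inj ->.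
Qed.

End Indexing.

Lemma gl_offdiag (R : realType) (rho : R) (x y : lbl) : x <> y -> gl rho 0 x y = 0.
Proof.
case: x => [a|a|a|a|]; case: y => [b|b|b|b|] //= xy;
  try (case: (a =P b) => [ab|_]; [by rewrite ab in xy | done]);
  by case: ifP => _; rewrite ?mul0r ?oppr0 ?mul0r.
Qed.

Section Normalization.
Variables (R : realType) (rho : R).
Hypothesis rho_gt0 : 0 < rho.

Definition bnorm (l : lbl) : R := ratr (norm_coef l) * Num.sqrt rho^-1 ^+ weight l.

Lemma sqrt_inv_neq0 : Num.sqrt rho^-1 != 0.
Proof. by rewrite gt_eqF // sqrtr_gt0 invr_gt0. Qed.

Lemma norm_coef_neq0 l : norm_coef l != 0.
Proof. by case: l => [a|a|a|a|] //=; case: ifP. Qed.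

Lemma bnorm_neq0 l : bnorm l != 0.
Proof. by rewrite mulf_neq0 ?expf_neq0 ?sqrt_inv_neq0 // fmorph_eq0 norm_coef_neq0. Qed.

Lemma gl_bnorm l : gl rho 0 l l = bnorm l ^+ 2.
Proof.
have rho_neq0 : rho != 0 by rewrite gt_eqF.
rewrite /bnorm exprMn -exprM mulnC exprM sqr_sqrtr ?invr_ge0 ?ltW //.
case: l => [a|a|a|a|] /=; rewrite ?eqxx; try case: ifP => _;
by rewrite ?rmorph1 ?fmorphV ?rmorph_nat ?expr0 ?expr1 /=; field; rewrite ?rho_neq0.
Qed.

(* Brackets respect [weight], so the powers of [sqrt (1/rho)] cancel. *)
Lemma onb_brl_ratr u v w :
  brl R u v w * bnorm w / (bnorm u * bnorm v) = ratr (onb_brl u v w).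
Proof.
have [wuv|wuv] := eqVneq (weight w) (weight u + weight v)%N; last first.
  by rewrite /onb_brl /brlQ brl_over_field !brl_graded // !mul0r rmorph0.
rewrite /onb_brl /brlQ /bnorm wuv exprD brl_over_field.
rewrite -(brl_rmorph (ratr : {rmorphism rat -> R})).
rewrite !(rmorphM, fmorphV); field.
by rewrite !expf_neq0 ?sqrt_inv_neq0 // !fmorph_eq0 !norm_coef_neq0.
Qed.

End Normalization.

Section Soliton.
Variables (R : realType) (m : nat) (rho : R).
Hypothesis rho_gt0 : 0 < rho.
Local Notation n := m.+2.

Definition basis_norm (i : 'I_(lN n)) : R := bnorm rho (decode n i).

Lemma basis_norm_neq0 i : basis_norm i != 0.
Proof. exact: bnorm_neq0. Qed.

Lemma gram_diag : gram n rho 0 = diag_mx (\row_i basis_norm i ^+ 2).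
Proof.
apply/matrixP => i j; rewrite !mxE; have [<-|ij] := eqVneq i j; first exact: gl_bnorm.
by rewrite mulr0n gl_offdiag // => /decode_ord_inj /eqP; rewrite (negbTE ij).
Qed.

Lemma lbrk_graded (i j k : 'I_(lN n)) :
  weight (decode n k) != (weight (decode n i) + weight (decode n j))%N ->
  @lbrk R n i j k 0 = 0.
Proof. by move=> w_ijk; rewrite mxE brl_over_field brl_graded. Qed.

Lemma normalized_bindex (x y w : bindex m) :
  normalized_const (@lbrk R n) basis_norm (bindex_ord x) (bindex_ord y) (bindex_ord w) =
  ratr (bindex_const x y w).
Proof. by rewrite /normalized_const /basis_norm mxE !decode_bindex_ord onb_brl_ratr. Qed.

Lemma ricci_endo_entry (i j : 'I_(lN n)) :
  ricci_endo (@lbrk R n) (gram n rho 0) i j =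
  (i == j)%:R * (- (2 * m + 8)%:R + (2 * m + 6)%:R * (weight (decode n i))%:R).
Proof.
rewrite (ricci_endo_orthogonal (@lbrk R n) basis_norm_neq0 gram_diag).
case: (bindex_ord_bij m) => g gK Kg; rewrite -(Kg i) -(Kg j).
rewrite (onb_ricci_reindex _ _ (bindex_ord_bij m) normalized_bindex).
rewrite -rmorph_onb_ricci onb_ricci_bindex.
move: (g i) (g j) => z y; rewrite (inj_eq (bij_inj (bindex_ord_bij m))) eq_sym.
have [<-|yz] := eqVneq y z; last by rewrite !mul0r rmorph0 mulr0.
rewrite mulfV ?basis_norm_neq0 // !mul1r decode_bindex_ord.
by rewrite rmorphB rmorphM !rmorph_nat addrC.
Qed.

End Soliton.

Theorem theorem4p11 (R : realType) (n : nat) (rho : R) :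
  (1 < n)%N -> 0 < rho ->
  exists (lam : R) (D : 'M[R]_(lN n)),
    is_derivation (@lbrk R n) D /\
    ricci_endo (@lbrk R n) (gram n rho 0) = lam%:M + D.
Proof.
case: n => [|[|m]] // _ rho_gt0.
exists (- (2 * m + 8)%:R), (diag_mx (\row_i ((2 * m + 6)%:R * (weight (decode m.+2 i))%:R))).
split; first exact/graded_derivation/lbrk_graded.
apply/matrixP => i j; rewrite ricci_endo_entry // !mxE.
by rewrite mulr_natl mulrnDl.
Qed.
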